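(* Let \[P=\{x\in[0,2]^2 : x_1+10x_2\le 20,\ 10x_1+x_2\le 20\},\] \[P_L=\{(x,z)\in\mathbb{R}^2\times[0,1]^4 : x\in P,\ x_i=z_{i1}+2z_{i2}\text{ for } i=1,2\},\] \[P_{L+}=\{(x,z)\in\mathbb{R}^2\times[0,1]^4 : x\in P,\ x_i=z_{i1}+2z_{i2},\ z_{i1}+z_{i2}\le1\text{ for } i=1,2\},\] where all variables of $P_L$ and $P_{L+}$ (both $x$ and $z$) are integer variables. Then \[\operatorname{proj}_x\big(\mathrm{SC}(P_{L+})\big)\subsetneq \operatorname{proj}_x\big(\mathrm{SC}(P_L)\big).\]
   Context: For $X\subseteq\mathbb{R}^N$ with all coordinates integer, the split closure is $\mathrm{SC}(X)=\bigcap\mathrm{conv}(X\setminus S)$, the intersection over all split sets $S=\{y\in\mathbb{R}^N:\pi_0<\pi^Ty<\pi_0+1\}$ with $\pi\in\mathbb{Z}^N$, $\pi_0\in\mathbb{Z}$. $\operatorname{proj}_x$ is orthogonal projection onto the $x$-coordinates. *)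

From mathcomp Require Import all_boot all_order all_algebra.
From mathcomp Require Import reals.
Set Implicit Arguments. Unset Strict Implicit. Unset Printing Implicit Defensive.
Import Order.TTheory GRing.Theory Num.Theory.
Local Open Scope ring_scope.

Section Defs.
Variable R : realType.

Definition pt (N : nat) := 'I_N -> R.

Definition conv (N : nat) (A : pt N -> Prop) : pt N -> Prop :=
  fun y => exists (k : nat) (lam : 'I_k -> R) (p : 'I_k -> pt N),
    (forall j, 0 <= lam j) /\ \sum_(j < k) lam j = 1 /\
    (forall j, A (p j)) /\
    (forall i, y i = \sum_(j < k) lam j * p j i).

Definition split_set (N : nat) (pi : 'I_N -> int) (pi0 : int) : pt N -> Prop :=
  fun y => pi0%:~R < \sum_(i < N) (pi i)%:~R * y i < (pi0 + 1)%:~R.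

(* Split closure (all coordinates integer). *)
Definition split_closure (N : nat) (X : pt N -> Prop) : pt N -> Prop :=
  fun y => forall (pi : 'I_N -> int) (pi0 : int),
    conv (fun p => X p /\ ~ split_set pi pi0 p) y.

(* Points of R^(2+4): coordinates (x1, x2, z11, z12, z21, z22). *)
Definition xc (y : pt (2 + 4)) (i : 'I_2) : R := y (lshift 4 i).
Definition zc (y : pt (2 + 4)) (j : 'I_4) : R := y (rshift 2 j).

Definition proj_x (A : pt (2 + 4) -> Prop) : pt 2 -> Prop :=
  fun x => exists y, A y /\ forall i : 'I_2, xc y i = x i.

Definition i0 : 'I_2 := @Ordinal 2 0 isT.
Definition i1 : 'I_2 := @Ordinal 2 1 isT.
Definition j0 : 'I_4 := @Ordinal 4 0 isT.
Definition j1 : 'I_4 := @Ordinal 4 1 isT.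
Definition j2 : 'I_4 := @Ordinal 4 2 isT.
Definition j3 : 'I_4 := @Ordinal 4 3 isT.

Definition inP (x : pt 2) : Prop :=
  (forall i, 0 <= x i <= 2) /\
  x i0 + 10 * x i1 <= 20 /\ 10 * x i0 + x i1 <= 20.

Definition PL (y : pt (2 + 4)) : Prop :=
  inP (xc y) /\ (forall j, 0 <= zc y j <= 1) /\
  xc y i0 = zc y j0 + 2 * zc y j1 /\
  xc y i1 = zc y j2 + 2 * zc y j3.

Definition PLplus (y : pt (2 + 4)) : Prop :=
  PL y /\ zc y j0 + zc y j1 <= 1 /\ zc y j2 + zc y j3 <= 1.

End Defs.

From mathcomp Require Import all_boot all_order all_algebra.
From mathcomp Require Import reals zify ring lra.
Set Implicit Arguments. Unset Strict Implicit. Unset Printing Implicit Defensive.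
Import Order.TTheory GRing.Theory Num.Theory.
Local Open Scope ring_scope.

(** The point with z = (1/2, 3/10, 1/2, 3/10), hence x = (11/10, 11/10), lies
    in SC(P_L).  On points of P_L a split form pi reduces to an integer form e in
    z alone.  If e.z is an integer the point lies in no split with normal pi.
    Otherwise either |e.d| >= 20 for one of 18 directions d with z +- d/20 in
    P_L, and these two points lie on both sides of the split, or e is one of
    finitely many forms (the inequalities |e.d| < 20 bound it) for which one of
    ten explicit segments of P_L through z, used for e or for -e, crosses the
    split.  In P_L+, z12 = 1 forces x = (2, 0); so the splits on z12 and on z22
    give the cuts x1 + x2 - z11 + z21 <= 2 and x1 + x2 + z11 - z21 <= 2, whose
    sum x1 + x2 <= 2 excludes x = (11/10, 11/10) from proj_x SC(P_L+). *)

Section SplitHull.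
Variables (R : realType) (N : nat).
Implicit Types (X Y : pt R N -> Prop) (a b y : pt R N).

Lemma conv_mem X y : X y -> conv X y.
Proof.
move=> Xy; exists 1%N, (fun=> 1), (fun=> y).
split; first by move=> _; exact: ler01.
by rewrite big_ord1; split=> //; split=> // i; rewrite big_ord1 mul1r.
Qed.

Lemma conv_sub X Y y : (forall p, X p -> Y p) -> conv X y -> conv Y y.
Proof.
move=> XY [k [lam [p [? [? [Xp ?]]]]]].
by exists k, lam, p; do !split=> //; move=> j; apply/XY/Xp.
Qed.

Lemma conv_segment X a b y l :
  X a -> X b -> 0 <= l <= 1 -> (forall i, y i = l * a i + (1 - l) * b i) ->
  conv X y.
Proof.
move=> Xa Xb /andP[l0 l1] hy.
exists 2%N, (fun j : 'I_2 => if j == ord0 then l else 1 - l),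
  (fun j : 'I_2 => if j == ord0 then a else b).
split; first by move=> j; case: ifP => _ //; rewrite subr_ge0.
split; first by rewrite big_ord_recr big_ord1 /= addrC subrK.
split; first by move=> j; case: ifP.
by move=> i; rewrite big_ord_recr big_ord1 /= hy.
Qed.

Lemma conv_le X (w : 'I_N -> R) (c : R) y :
  (forall p, X p -> \sum_i w i * p i <= c) -> conv X y -> \sum_i w i * y i <= c.
Proof.
move=> Xc [k [lam [p [lam_ge0 [lam1 [Xp hy]]]]]].
have -> : \sum_i w i * y i = \sum_j lam j * \sum_i w i * p j i.
  under eq_bigr do rewrite hy mulr_sumr.
  rewrite exchange_big /=; apply: eq_bigr => j _; rewrite mulr_sumr.
  by apply: eq_bigr => i _; rewrite mulrCA.
rewrite -[c]mul1r -lam1 mulr_suml; apply: ler_sum => j _.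
by rewrite ler_wpM2l // Xc.
Qed.

Definition split_form (pi : 'I_N -> int) y : R := \sum_(i < N) (pi i)%:~R * y i.

Lemma split_setE (pi : 'I_N -> int) (pi0 : int) y :
  split_set pi pi0 y = (pi0%:~R < split_form pi y < (pi0 + 1)%:~R).
Proof. by []. Qed.

Definition split_hull X (pi : 'I_N -> int) (pi0 : int) : pt R N -> Prop :=
  conv (fun p => X p /\ ~ split_set pi pi0 p).

Lemma split_closure_sub X Y y :
  (forall p, X p -> Y p) -> split_closure X y -> split_closure Y y.
Proof. by move=> XY Xy pi pi0; apply: conv_sub (Xy pi pi0) => p [/XY]. Qed.

Lemma split_setN_le (pi : 'I_N -> int) (pi0 : int) y :
  ~ split_set pi pi0 y ->
  split_form pi y <= pi0%:~R \/ (pi0 + 1)%:~R <= split_form pi y.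
Proof.
rewrite split_setE => y_nsplit; case: (lerP (split_form pi y) pi0%:~R); first by left.
by move=> lo; right; rewrite leNgt; apply/negP => hi; apply: y_nsplit; rewrite lo hi.
Qed.

Lemma split_hull_mem X (pi : 'I_N -> int) (pi0 : int) y :
  X y -> ~ split_set pi pi0 y -> split_hull X pi pi0 y.
Proof. by move=> Xy yS; apply: conv_mem. Qed.

Lemma split_hull_segment X (pi : 'I_N -> int) (pi0 : int) a b y l :
  X a -> X b -> 0 <= l <= 1 -> (forall i, y i = l * a i + (1 - l) * b i) ->
  split_form pi b <= pi0%:~R -> (pi0 + 1)%:~R <= split_form pi a ->
  split_hull X pi pi0 y.
Proof.
move=> Xa Xb l01 hy hb ha; apply: conv_segment l01 hy.
- by split=> //; rewrite split_setE => /andP[_]; rewrite ltNge ha.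
- by split=> //; rewrite split_setE => /andP[]; rewrite ltNge hb.
Qed.

End SplitHull.

Definition vec4 (T : Type) := (T * T * T * T)%type.

Definition map4 (S T : Type) (f : S -> T) (z : vec4 S) : vec4 T :=
  let: (z1, z2, z3, z4) := z in (f z1, f z2, f z3, f z4).

Definition dot4 (F : pzRingType) (e : vec4 int) (z : vec4 F) : F :=
  let: (e1, e2, e3, e4) := e in let: (z1, z2, z3, z4) := z in
  e1%:~R * z1 + e2%:~R * z2 + e3%:~R * z3 + e4%:~R * z4.

Definition comb4 (F : pzRingType) (l : F) (a b : vec4 F) : vec4 F :=
  let: (a1, a2, a3, a4) := a in let: (b1, b2, b3, b4) := b in
  (l * a1 + (1 - l) * b1, l * a2 + (1 - l) * b2,
   l * a3 + (1 - l) * b3, l * a4 + (1 - l) * b4).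

Lemma dot4_ratr (R : realType) e (z : vec4 rat) :
  ratr (dot4 e z) = dot4 e (map4 (ratr : rat -> R) z).
Proof.
by case: e z => [[[e1 e2] e3] e4] [[[z1 z2] z3] z4]; rewrite /= !rmorphD !rmorphM !rmorph_int.
Qed.

Lemma dot4_oppl (F : pzRingType) e (z : vec4 F) :
  dot4 (map4 -%R e) z = - dot4 e z.
Proof.
by case: e z => [[[e1 e2] e3] e4] [[[z1 z2] z3] z4]; rewrite /= !intrN !mulNr !opprD.
Qed.

Lemma comb4C (F : pzRingType) l (a b : vec4 F) : comb4 (1 - l) b a = comb4 l a b.
Proof.
by case: a b => [[[a1 a2] a3] a4] [[[b1 b2] b3] b4]; rewrite /= subKr !(addrC (l * _)).
Qed.

(* The inequalities of P_L in z-coordinates, each read as 0 <= h.1 + h.2 . z,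
   after eliminating x1 = z11 + 2 z12 and x2 = z21 + 2 z22. *)
Definition PLz_ineqs : seq (int * vec4 int) := [::
  (0, (1, 0, 0, 0)); (1, (-1, 0, 0, 0)); (0, (0, 1, 0, 0)); (1, (0, -1, 0, 0));
  (0, (0, 0, 1, 0)); (1, (0, 0, -1, 0)); (0, (0, 0, 0, 1)); (1, (0, 0, 0, -1));
  (0, (1, 2, 0, 0)); (2, (-1, -2, 0, 0)); (0, (0, 0, 1, 2)); (2, (0, 0, -1, -2));
  (20, (-1, -2, -10, -20)); (20, (-10, -20, -1, -2))].

Definition inPLz (F : numDomainType) (z : vec4 F) : bool :=
  all (fun h => 0 <= h.1%:~R + dot4 h.2 z) PLz_ineqs.

Lemma inPLz_ratr (R : realType) (z : vec4 rat) :
  inPLz z -> inPLz (map4 (ratr : rat -> R) z).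
Proof.
move=> /allP zP; apply/allP => h /zP.
by rewrite -dot4_ratr -(rmorph_int (ratr : rat -> R)) -rmorphD ler0q.
Qed.

Section Coordinates.
Variable R : realType.

Definition lift (z : vec4 R) : pt R (2 + 4) :=
  let: (z1, z2, z3, z4) := z in
  fun i => nth 0 [:: z1 + 2 * z2; z3 + 2 * z4; z1; z2; z3; z4] i.

Lemma inPLz_PL z : inPLz z -> PL (lift z).
Proof.
case: z => [[[z1 z2] z3] z4]; rewrite /inPLz /dot4 /=.
do 14 case/andP => ?; move=> _.
split; last split; last by rewrite /xc /zc.
- split; last by rewrite /xc /=; split; lra.
  by move=> [[|[|//]] ?]; rewrite /xc /=; apply/andP; split; lra.
- by move=> [[|[|[|[|//]]]] ?]; rewrite /zc /=; apply/andP; split; lra.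
Qed.

Lemma sum_xz (f : 'I_(2 + 4) -> R) :
  \sum_i f i = f (lshift 4 i0) + f (lshift 4 i1) + f (rshift 2 j0)
               + f (rshift 2 j1) + f (rshift 2 j2) + f (rshift 2 j3).
Proof.
rewrite !big_ord_recl big_ord0 addr0 !addrA.
by congr (_ + _ + _ + _ + _ + _); congr f; apply/val_inj.
Qed.

Lemma split_formE (pi : 'I_(2 + 4) -> int) (y : pt R (2 + 4)) :
  split_form pi y =
    (pi (lshift 4 i0))%:~R * xc y i0 + (pi (lshift 4 i1))%:~R * xc y i1
    + (pi (rshift 2 j0))%:~R * zc y j0 + (pi (rshift 2 j1))%:~R * zc y j1
    + (pi (rshift 2 j2))%:~R * zc y j2 + (pi (rshift 2 j3))%:~R * zc y j3.
Proof. exact: sum_xz. Qed.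

Definition zdir (pi : 'I_(2 + 4) -> int) : vec4 int :=
  (pi (rshift 2 j0) + pi (lshift 4 i0), pi (rshift 2 j1) + 2 * pi (lshift 4 i0),
   pi (rshift 2 j2) + pi (lshift 4 i1), pi (rshift 2 j3) + 2 * pi (lshift 4 i1)).

Lemma split_form_lift pi (z : vec4 R) : split_form pi (lift z) = dot4 (zdir pi) z.
Proof.
case: z => [[[z1 z2] z3] z4]; rewrite split_formE /xc /zc /= !intrD !intrM.
ring.
Qed.

Lemma lift_comb4 l (a b : vec4 R) i :
  lift (comb4 l a b) i = l * lift a i + (1 - l) * lift b i.
Proof.
case: a b => [[[a1 a2] a3] a4] [[[b1 b2] b3] b4].
by case: i => [[|[|[|[|[|[|//]]]]]] ?] /=; ring.
Qed.

Definition qlift (z : vec4 rat) : pt R (2 + 4) := lift (map4 ratr z).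

Lemma split_form_qlift pi z : split_form pi (qlift z) = ratr (dot4 (zdir pi) z).
Proof. by rewrite split_form_lift dot4_ratr. Qed.

Lemma qsegment_split_hull (pi : 'I_(2 + 4) -> int) (pi0 : int) (a b : vec4 rat) l y :
  inPLz a -> inPLz b -> 0 <= l <= 1 -> y = comb4 l a b ->
  dot4 (zdir pi) b <= pi0%:~R -> (pi0 + 1)%:~R <= dot4 (zdir pi) a ->
  split_hull (@PL R) pi pi0 (qlift y).
Proof.
move=> a_in b_in l01 -> hb ha.
apply: (split_hull_segment (a := qlift a) (b := qlift b) (l := ratr l)).
- exact/inPLz_PL/inPLz_ratr.
- exact/inPLz_PL/inPLz_ratr.
- by rewrite ler0q -(rmorph1 (ratr : rat -> R)) ler_rat.
- move=> i; rewrite /qlift -lift_comb4; congr (lift _ i).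
  case: a b {a_in b_in ha hb} => [[[a1 a2] a3] a4] [[[b1 b2] b3] b4] /=.
  by rewrite !rmorphD !rmorphM rmorphB rmorph1.
- by rewrite split_form_qlift -(rmorph_int (ratr : rat -> R)) ler_rat.
- by rewrite split_form_qlift -(rmorph_int (ratr : rat -> R)) ler_rat.
Qed.
End Coordinates.

Definition shift4 (t : rat) (d : vec4 int) (y : vec4 rat) : vec4 rat :=
  let: (y1, y2, y3, y4) := y in let: (d1, d2, d3, d4) := d in
  (y1 + t * d1%:~R, y2 + t * d2%:~R, y3 + t * d3%:~R, y4 + t * d4%:~R).

Lemma dot4_shift4 e t d y :
  dot4 e (shift4 t d y) = dot4 e y + t * (dot4 e d)%:~R.
Proof.
case: e d y => [[[e1 e2] e3] e4] [[[d1 d2] d3] d4] [[[y1 y2] y3] y4].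
by rewrite /= !intrD !intrM !intz; ring.
Qed.

Lemma comb4_shift4 t d y : comb4 (1 / 2) (shift4 t d y) (shift4 (- t) d y) = y.
Proof.
case: d y => [[[d1 d2] d3] d4] [[[y1 y2] y3] y4] /=.
by congr (_, _, _, _); field.
Qed.

Lemma int_between_eq (F : numDomainType) (m n : int) (x : F) :
  m%:~R < x < (m + 1)%:~R -> n%:~R < x < (n + 1)%:~R -> m = n.
Proof.
move=> /andP[mx xm] /andP[nx xn].
have := lt_trans mx xn; have := lt_trans nx xm; rewrite !ltr_int; lia.
Qed.

Definition cert := (vec4 rat * vec4 rat * rat * int)%type.

Definition cert_segment (y : vec4 rat) (C : cert) : bool :=
  let: (a, b, l, _) := C in [&& inPLz a, inPLz b, 0 <= l <= 1 & y == comb4 l a b].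

Definition cert_separates (y : vec4 rat) (e : vec4 int) (C : cert) : bool :=
  let: (a, b, _, c) := C in
  [&& c%:~R < dot4 e y < (c + 1)%:~R, dot4 e b <= c%:~R & (c + 1)%:~R <= dot4 e a].

Section SplitHullCertificates.
Variables (R : realType) (pi : 'I_(2 + 4) -> int) (pi0 : int) (y : vec4 rat).
Hypothesis y_split : pi0%:~R < dot4 (zdir pi) y < (pi0 + 1)%:~R.

Lemma direction_split_hull t d :
  inPLz (shift4 t d y) -> inPLz (shift4 (- t) d y) ->
  1 <= t * `|dot4 (zdir pi) d|%:~R -> split_hull (@PL R) pi pi0 (qlift R y).
Proof.
move: y_split => /andP[y_lo y_hi] plus_in minus_in.
have [ed_ge0|ed_lt0] := ger0P (dot4 (zdir pi) d); rewrite ?intrN => ht.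
- apply: (qsegment_split_hull R plus_in minus_in _ (esym (comb4_shift4 t d y))).
  + by [].
  + by rewrite dot4_shift4; lra.
  + by rewrite dot4_shift4; lra.
- have := comb4_shift4 (- t) d y; rewrite opprK => /esym y_comb.
  apply: (qsegment_split_hull R minus_in plus_in _ y_comb).
  + by [].
  + by rewrite dot4_shift4; lra.
  + by rewrite dot4_shift4; lra.
Qed.

Lemma cert_split_hull C :
  cert_segment y C ->
  cert_separates y (zdir pi) C || cert_separates y (map4 -%R (zdir pi)) C ->
  split_hull (@PL R) pi pi0 (qlift R y).
Proof.
case: C => [[[a b] l] c] /and4P[a_in b_in l01 /eqP y_comb] /orP[] /and3P[yc hb ha].
- rewrite (int_between_eq yc y_split) in hb ha.
  exact: (qsegment_split_hull R a_in b_in l01 y_comb hb ha).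
- rewrite !dot4_oppl !intrD in hb ha yc.
  have pi0E : pi0 = - (c + 1).
    apply: int_between_eq y_split _; case/andP: yc => ? ?.
    by rewrite !(intrN, intrD); apply/andP; split; lra.
  apply: (qsegment_split_hull R (l := 1 - l) b_in a_in).
  + by case/andP: l01 => ? ?; apply/andP; split; lra.
  + by rewrite comb4C.
  + by rewrite pi0E !(intrN, intrD); lra.
  + by rewrite pi0E !(intrN, intrD); lra.
Qed.

End SplitHullCertificates.

Definition zstar : vec4 rat := (1 / 2, 3 / 10, 1 / 2, 3 / 10).

Lemma zstar_inPLz : inPLz zstar.
Proof. by vm_compute. Qed.

Lemma dot4_zstar e : dot4 e zstar = (dot4 e (5, 3, 5, 3))%:~R / 10.
Proof.
case: e => [[[e1 e2] e3] e4]; rewrite /= !intrD !intrM !intz.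
by field.
Qed.

Definition directions : seq (vec4 int) := [::
  (2, 6, 2, 6); (2, 6, 10, 2); (3, 6, -10, 6); (4, 6, 10, -6); (5, 6, -10, -3);
  (5, 6, -5, -6); (10, -6, -10, -2); (10, -6, -10, 6); (10, -6, -3, -6);
  (10, -6, 4, 6); (10, -6, 10, -6); (10, -6, 10, 3); (10, 2, -10, 6);
  (10, 2, 2, 6); (10, 2, 10, 2); (10, 3, -10, -3); (10, 3, -5, -6); (10, 3, 10, -6)].

Lemma directions_inPLz :
  all (fun d => inPLz (shift4 (1 / 20) d zstar) && inPLz (shift4 (- (1 / 20)) d zstar))
      directions.
Proof. by vm_compute. Qed.

Definition certificates : seq cert := [::
  ((40/101, 0, 90/101, 54/101), (50/79, 54/79, 0, 0), 101/180, -2);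
  ((0, 7/45, 1, 2/45), (1, 4/9, 0, 5/9), 1/2, -2);
  ((0, 3/5, 17/25, 3/5), (1, 0, 8/25, 0), 1/2, -1);
  ((5/9, 37/162, 4/9, 53/162), (0, 17/18, 1, 1/18), 9/10, -2);
  ((0, 0, 1, 0), (5/6, 1/2, 1/6, 1/2), 2/5, -1);
  ((5/7, 0, 5/7, 3/7), (0, 1, 0, 0), 7/10, -1);
  ((90/101, 54/101, 40/101, 0), (0, 0, 50/79, 54/79), 101/180, -2);
  ((17/25, 3/5, 0, 3/5), (8/25, 0, 1, 0), 1/2, -1);
  ((5/7, 3/7, 5/7, 0), (0, 0, 0, 1), 7/10, -1);
  ((100/121, 60/121, 100/121, 60/121), (0, 0, 0, 0), 121/200, 0)].

Lemma certificates_segment : all (cert_segment zstar) certificates.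
Proof. by vm_compute. Qed.

Definition zstar_integral (e : vec4 int) : bool := (10 %| dot4 e (5, 3, 5, 3))%Z.

Definition wide (e : vec4 int) : bool := has (fun d => 20 <= `|dot4 e d|) directions.

Definition certified (e : vec4 int) : bool :=
  has (cert_separates zstar e) certificates ||
  has (cert_separates zstar (map4 -%R e)) certificates.

Definition irange (n : nat) : seq int := [seq i%:Z - n%:Z | i <- iota 0 n.*2.+1].

Lemma mem_irange (n : nat) (k : int) : `|k| <= n -> k \in irange n.
Proof.
move=> kn; apply/mapP; exists (absz (k + n%:Z)); last by rewrite gez0_abs; lia.
by rewrite mem_iota; lia.
Qed.

Definition box : seq (vec4 int) :=
  allpairs pair (allpairs pair (allpairs pair (irange 2) (irange 3)) (irange 2)) (irange 3).

Lemma box_certified : all certified [seq e <- box | ~~ (zstar_integral e || wide e)].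
Proof. by vm_compute. Qed.

Lemma normal_cases e : [|| zstar_integral e, wide e | certified e].
Proof.
rewrite orbA; case e_easy: (zstar_integral e || wide e) => //=.
apply: (allP box_certified); rewrite mem_filter e_easy /=.
case: e e_easy => [[[e1 e2] e3] e4] /negbT; rewrite negb_or => /andP[_].
rewrite /wide -all_predC /= -!ltNge !ltr_norml !intz => bounds.
do 18 case/andP: bounds => /andP[? ?] bounds.
by rewrite !allpairs_f ?mem_irange //; lia.
Qed.

Lemma zstar_split_closure (R : realType) : split_closure (@PL R) (qlift R zstar).
Proof.
move=> pi pi0; change (split_hull (@PL R) pi pi0 (qlift R zstar)).
have zstar_PL := inPLz_PL (inPLz_ratr R zstar_inPLz).
have [y_split|/negP y_nsplit] :=
  boolP (pi0%:~R < split_form pi (qlift R zstar) < (pi0 + 1)%:~R); last first.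
  exact: split_hull_mem.
have {}y_split : pi0%:~R < dot4 (zdir pi) zstar < (pi0 + 1)%:~R.
  move: y_split; rewrite split_form_qlift.
  by rewrite -!(rmorph_int (ratr : rat -> R)) !ltr_rat.
case/or3P: (normal_cases (zdir pi)) => [/dvdzP[k ek] | /hasP[d d_dir d20] | e_cert].
- move: y_split; rewrite dot4_zstar ek intrM mulfK // !ltr_int; lia.
- have /andP[d_pos d_neg] := allP directions_inPLz d d_dir.
  have d_wide : 1 <= 1 / 20 * `|dot4 (zdir pi) d|%:~R :> rat.
    by rewrite -(ler_int rat) in d20; lra.
  exact: (direction_split_hull R y_split d_pos d_neg d_wide).
- case/orP: e_cert => /hasP[C C_in C_sep].
  all: apply: (cert_split_hull R y_split (allP certificates_segment C C_in)).
  all: by rewrite C_sep ?orbT.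
Qed.

(* z2 = 0 gives x1 = z1 and x2 + z3 <= 2; z2 = 1 gives z1 = 0, x1 = 2, so x2 = z3 = 0. *)
Lemma PLplus_cut (R : realType) (x1 x2 z1 z2 z3 z4 : R) :
  0 <= z1 -> 0 <= z2 -> 0 <= z3 -> 0 <= z4 -> z1 + z2 <= 1 -> z3 + z4 <= 1 ->
  x1 = z1 + 2 * z2 -> x2 = z3 + 2 * z4 -> 10 * x1 + x2 <= 20 ->
  z2 <= 0 \/ 1 <= z2 -> x1 + x2 - z1 + z3 <= 2.
Proof. by move=> ? ? ? ? ? ? ? ? ? [] ?; lra. Qed.

Definition xz_form (c : seq int) : 'I_(2 + 4) -> int := fun i => nth 0 c i.

Lemma split_closure_PLplus_x (R : realType) (y : pt R (2 + 4)) :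
  split_closure (@PLplus R) y -> xc y i0 + xc y i1 <= 2.
Proof.
move=> y_sc.
have cut (s c : seq int) :
    (forall p : pt R (2 + 4),
       PLplus p -> ~ split_set (xz_form s) 0 p -> split_form (xz_form c) p <= 2) ->
    split_form (xz_form c) y <= 2.
  by move=> c_valid; apply: conv_le (y_sc (xz_form s) 0) => p [pP p_nsplit]; apply: c_valid.
suff [cut1 cut2] : split_form (xz_form [:: 1; 1; -1; 0; 1; 0]) y <= 2 /\
          split_form (xz_form [:: 1; 1; 1; 0; -1; 0]) y <= 2.
  by rewrite !split_formE /xz_form /= in cut1 cut2; lra.
split; [apply: (cut [:: 0; 0; 0; 1; 0; 0]) | apply: (cut [:: 0; 0; 0; 0; 0; 1])].
all: move=> p [[[_ [x_ineq1 x_ineq2]] [z_box [x1E x2E]]] [z1_sum z2_sum]].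
all: move=> /split_setN_le; rewrite !split_formE /xz_form /= => z_int.
all: move: (z_box j0) (z_box j1) (z_box j2) (z_box j3).
all: move=> /andP[z1_ge0 _] /andP[z2_ge0 _] /andP[z3_ge0 _] /andP[z4_ge0 _].
- have z2_int : zc p j1 <= 0 \/ 1 <= zc p j1 by case: z_int; [left | right]; lra.
  have := PLplus_cut z1_ge0 z2_ge0 z3_ge0 z4_ge0 z1_sum z2_sum x1E x2E x_ineq2 z2_int.
  lra.
- have z4_int : zc p j3 <= 0 \/ 1 <= zc p j3 by case: z_int; [left | right]; lra.
  rewrite addrC in x_ineq1.
  have := PLplus_cut z3_ge0 z4_ge0 z1_ge0 z2_ge0 z2_sum z1_sum x2E x1E x_ineq1 z4_int.
  lra.
Qed.

Theorem theorem4 (R : realType) :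
  (forall x : pt R 2, proj_x (split_closure (@PLplus R)) x ->
                      proj_x (split_closure (@PL R)) x) /\
  (exists x : pt R 2, proj_x (split_closure (@PL R)) x /\
                      ~ proj_x (split_closure (@PLplus R)) x).
Proof.
split.
  move=> x [y [y_sc xE]]; exists y; split=> //.
  by apply: split_closure_sub y_sc => p [].
exists (xc (qlift R zstar)); split.
  by exists (qlift R zstar); split; [exact: zstar_split_closure |].
move=> [y [y_sc xE]]; have := split_closure_PLplus_x y_sc.
rewrite !xE /xc /qlift /zstar /=.
rewrite -(rmorph_nat (ratr : rat -> R) 2) -!rmorphM -!rmorphD ler_rat.
by vm_compute.
Qed.
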